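(* Let $A(x)=\sum_{n\ge 0}|\mathfrak D^1_{2n}(4213)|\,x^n$ and $B(x)=\sum_{n\ge 0}|\mathfrak D^1_{2n}(1342)|\,x^n$ be the ordinary generating functions. Then $A(x)=\dfrac{1}{1-xB(x)}$.
   Context: A Dumont permutation of the first kind of length $2n$ is a permutation $\pi\in\mathfrak S_{2n}$ such that for every $i=1,\dots,2n$: if $\pi(i)$ is even then $i<2n$ and $\pi(i)>\pi(i+1)$; if $\pi(i)$ is odd then $i=2n$ or $\pi(i)<\pi(i+1)$. $\mathfrak D^1_{2n}$ denotes the set of these ($\mathfrak D^1_0$ consists of the empty permutation). A permutation $\sigma$ contains a pattern $\tau\in\mathfrak S_k$ if some subsequence $(\sigma(i_1),\dots,\sigma(i_k))$, $i_1<\dots<i_k$, is order-isomorphic to $\tau$; otherwise $\sigma$ avoids $\tau$. $\mathfrak D^1_{2n}(T)$ denotes the set of permutations in $\mathfrak D^1_{2n}$ avoiding every pattern in $T$. *)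

From mathcomp Require Import all_boot all_fingroup.
Set Implicit Arguments. Unset Strict Implicit. Unset Printing Implicit Defensive.

(* one-line notation of a permutation of {1..m}: the i-th entry is sigma(i),
   with values shifted to 1..m (so parity matches the paper) *)
Definition perm_seq (m : nat) (s : 'S_m) : seq nat :=
  [seq (val (s i)).+1 | i <- enum 'I_m].

(* Dumont permutation of the first kind (positions 0-based, values 1-based):
   an even value is followed by a smaller one (and is not last);
   an odd value is last or followed by a larger one. *)
Definition dumont1 (w : seq nat) : bool :=
  [forall i : 'I_(size w),
     if ~~ odd (nth 0 w i) then (i.+1 < size w) && (nth 0 w i.+1 < nth 0 w i)
     else (i.+1 == size w) || (nth 0 w i < nth 0 w i.+1)].

Definition order_iso (t p : seq nat) : bool :=
  (size t == size p) &&
  [forall i : 'I_(size p), forall j : 'I_(size p),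
     (nth 0 t i < nth 0 t j) == (nth 0 p i < nth 0 p j)].

Definition contains (w p : seq nat) : bool :=
  [exists m : (size w).-tuple bool, order_iso (mask m w) p].

Definition numD1 (p : seq nat) (n : nat) : nat :=
  #|[set s : 'S_(n.*2) | dumont1 (perm_seq s) && ~~ contains (perm_seq s) p]|.

From mathcomp Require Import all_boot all_fingroup zify.
Set Implicit Arguments. Unset Strict Implicit. Unset Printing Implicit Defensive.

(* In a Dumont permutation of the first kind the even value 2 is followed by a
   smaller value, so pi = u 2 1 w.  If pi avoids 4213, every letter of u is
   below every letter of w (otherwise y 2 1 z is a 4213), hence u is a
   permutation of {3, ..., j+2} and w of {j+3, ..., 2n+2}; the letter j+2 is
   the maximum of the Dumont word u 2, so it is even and j is even.  The
   complement x |-> j+3-x of u exchanges parities as well as ascents and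
   descents, so it is again Dumont, and it turns 4213 into 1342; shifting w down
   by the even number j+2 changes nothing.  Hence pi |-> (sigma, beta) is a
   bijection from D1_{2n+2}(4213) onto the union over k of
   D1_{2(n-k)}(1342) x D1_{2k}(4213), which is A = 1 + x A B. *)

Lemma perm_iotaE a n (w : seq nat) :
  perm_eq w (iota a n) = [&& uniq w, size w == n & all (fun x => a <= x < a + n) w].
Proof.
apply/idP/and3P => [pw | [uw /eqP <- /allP wa]].
  rewrite (perm_uniq pw) iota_uniq (perm_size pw) size_iota eqxx.
  by split=> //; apply/allP=> x; rewrite (perm_mem pw) mem_iota.
have sub : {subset w <= iota a (size w)} by move=> x /wa; rewrite mem_iota.
apply: uniq_perm; rewrite ?iota_uniq //.
by apply: (uniq_min_size uw sub _).2; rewrite size_iota.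
Qed.

Lemma perm_iota_map f a b n (s : seq nat) :
  {in iota a n &, injective f} -> {in iota a n, forall x, b <= f x < b + n} ->
  perm_eq s (iota a n) -> perm_eq (map f s) (iota b n).
Proof.
move=> finj frange ps; have sub := perm_mem ps.
rewrite perm_iotaE size_map (perm_size ps) size_iota eqxx /=.
rewrite map_inj_in_uniq ?(perm_uniq ps) ?iota_uniq /=; last first.
  by move=> x y; rewrite !sub; exact: finj.
by apply/allP => _ /mapP [x xs ->]; apply: frange; rewrite -sub.
Qed.

Lemma perm_iota_cat_lt a (u w : seq nat) :
  perm_eq (u ++ w) (iota a (size u + size w)) -> {in u & w, forall y z, y < z} ->
  perm_eq u (iota a (size u)) /\ perm_eq w (iota (a + size u) (size w)).
Proof.
move=> puw lt_uw; have mem_uw := perm_mem puw.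
have pu : perm_eq u (iota a (size u)).
  have := perm_uniq puw; rewrite iota_uniq cat_uniq => /and3P [uniq_u _ _].
  rewrite perm_iotaE uniq_u eqxx; apply/allP => y yu.
  have : y \in u ++ w by rewrite mem_cat yu.
  rewrite mem_uw mem_iota => /andP [ay y_lt].
  rewrite ay /= ltnNge; apply/negP => y_ge.
  have sub : {subset iota a (size u).+1 <= u}.
    move=> v; rewrite mem_iota => /andP [av v_lt].
    have : v \in u ++ w by rewrite mem_uw mem_iota av; lia.
    by rewrite mem_cat => /orP [// | /(lt_uw _ _ yu)]; lia.
  by have := uniq_leq_size (iota_uniq _ _) sub; rewrite size_iota ltnn.
split=> //; rewrite -(perm_cat2l u); apply: perm_trans puw _.
by rewrite iotaD perm_cat2r perm_sym.
Qed.

Lemma perm_iota1_range m (s : seq nat) :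
  perm_eq s (iota 1 m) -> {in s, forall x, 0 < x <= size s}.
Proof. by move=> ps x; rewrite (perm_mem ps) (perm_size ps) mem_iota size_iota add1n ltnS. Qed.

Lemma perm_seq_inj m : injective (@perm_seq m).
Proof.
move=> s t eq_st; apply/permP=> i; have := congr1 (fun l => nth 0 l i) eq_st.
rewrite /perm_seq !(nth_map i) -?enumT ?size_enum_ord // nth_ord_enum.
by case=> /val_inj.
Qed.

Lemma perm_seq_iota m (s : 'S_m) : perm_eq (perm_seq s) (iota 1 m).
Proof.
rewrite perm_iotaE size_map size_enum_ord eqxx /=.
rewrite map_inj_uniq ?enum_uniq; last by move=> i j [] /val_inj /perm_inj.
by apply/allP => _ /mapP [i _ ->]; rewrite /= add1n ltnS ltn_ord.
Qed.

Lemma perm_map_perm_seq m :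
  perm_eq (map (@perm_seq m) (enum 'S_m)) (permutations (iota 1 m)).
Proof.
have uniq_perm_seqs : uniq (map (@perm_seq m) (enum 'S_m)).
  by rewrite map_inj_uniq ?enum_uniq //; exact: perm_seq_inj.
have sub : {subset map (@perm_seq m) (enum 'S_m) <= permutations (iota 1 m)}.
  by move=> _ /mapP [s _ ->]; rewrite mem_permutations perm_seq_iota.
apply: uniq_perm; rewrite ?permutations_uniq //.
apply: (uniq_min_size uniq_perm_seqs sub _).2.
by rewrite size_permutations ?iota_uniq // size_iota size_map -cardE card_Sn.
Qed.

Lemma card_perm_seq_pred m (Q : pred (seq nat)) :
  #|[set s : 'S_m | Q (perm_seq s)]| = count Q (permutations (iota 1 m)).
Proof.
rewrite cardsE cardE /enum_mem size_filter -enumT.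
have /seq.permP <- := perm_map_perm_seq m.
by rewrite [RHS]count_map.
Qed.

Lemma containsP w p : reflect (exists2 s, subseq s w & order_iso s p) (contains w p).
Proof.
apply: (iffP existsP) => [[m iso] | [s /subseqP [m size_m ->] iso]].
  by exists (mask m w); rewrite ?mask_subseq.
by exists (Tuple (introT eqP size_m)).
Qed.

Lemma contains_subseq w w' p : subseq w w' -> contains w p -> contains w' p.
Proof.
move=> sub_ww' /containsP [s sub_sw iso]; apply/containsP.
by exists s; first exact: subseq_trans sub_ww'.
Qed.

Lemma subseq_map_inv (T U : eqType) (f : T -> U) s w :
  subseq s (map f w) -> exists2 s', s = map f s' & subseq s' w.
Proof. by case/subseqP=> m _ ->; exists (mask m w); rewrite ?map_mask ?mask_subseq. Qed.

Lemma order_iso_map f s p :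
  {in s &, {mono f : x y / x < y}} -> order_iso (map f s) p = order_iso s p.
Proof.
move=> fmono; rewrite /order_iso size_map; case: eqP => //= size_s.
apply: eq_forallb => i; apply: eq_forallb => j.
by rewrite !(nth_map 0) ?size_s // fmono // mem_nth ?size_s.
Qed.

Lemma order_iso_map_anti f K s p :
  {in s &, {mono f : x y /~ x < y}} -> all (fun x => x <= K) p ->
  order_iso (map f s) p = order_iso s [seq K - x | x <- p].
Proof.
move=> fanti /allP pK; rewrite /order_iso !size_map; case: eqP => //= size_s.
set q := [seq K - x | x <- p].
(* f reverses comparisons, so entry (i, j) of one side is entry (j, i) of the other *)
have cmp_swap (i j : 'I_(size p)) :
    ((nth 0 (map f s) i < nth 0 (map f s) j) == (nth 0 p i < nth 0 p j)) =
    ((nth 0 s j < nth 0 s i) == (nth 0 q j < nth 0 q i)).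
  rewrite /q !(nth_map 0) ?size_s // fanti ?mem_nth ?size_s //; congr (_ == _).
  move: (pK _ (mem_nth 0 (ltn_ord i))) (pK _ (mem_nth 0 (ltn_ord j))).
  by move: (nth 0 p i) (nth 0 p j) => a b aK bK; apply/idP/idP; lia.
apply/idP/idP => /forallP iso; apply/forallP => i; apply/forallP => j.
  by rewrite -cmp_swap; exact: forallP (iso j) i.
by rewrite cmp_swap; exact: forallP (iso j) i.
Qed.

Lemma contains_map f w p q :
  (forall s, subseq s w -> order_iso (map f s) p = order_iso s q) ->
  contains (map f w) p = contains w q.
Proof.
move=> iso_map; apply/containsP/containsP => [[_ /subseq_map_inv [s -> sub_sw]] | [s sub_sw]].
  by rewrite iso_map // => iso; exists s.
by rewrite -iso_map // => iso; exists (map f s); rewrite ?map_subseq.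
Qed.

Lemma contains_map_mono f w p :
  {in w &, {mono f : x y / x < y}} -> contains (map f w) p = contains w p.
Proof.
move=> fmono; apply: contains_map => s /mem_subseq sub_sw.
by apply: order_iso_map; exact: sub_in2 fmono.
Qed.

Lemma contains_map_anti f K w p :
  {in w &, {mono f : x y /~ x < y}} -> all (fun x => x <= K) p ->
  contains (map f w) p = contains w [seq K - x | x <- p].
Proof.
move=> fanti pK; apply: contains_map => s /mem_subseq sub_sw.
by apply: order_iso_map_anti => //; exact: sub_in2 fanti.
Qed.

Lemma subseq_cat_inv (T : eqType) (s x y : seq T) : subseq s (x ++ y) ->
  exists s1 s2, [/\ s = s1 ++ s2, subseq s1 x & subseq s2 y].
Proof.
case/subseqP=> m size_m ->; rewrite size_cat in size_m.
exists (mask (take (size x) m) x), (mask (drop (size x) m) y).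
by rewrite -mask_cat ?cat_take_drop ?mask_subseq // size_takel // size_m leq_addr.
Qed.

Lemma subseq_cat_ends (T : eqType) (a d : T) s x y :
  subseq (a :: rcons s d) (x ++ y) ->
  [\/ subseq (a :: rcons s d) x, subseq (a :: rcons s d) y | a \in x /\ d \in y].
Proof.
case/subseq_cat_inv=> s1 [s2 [eq_s sub_x sub_y]].
case: s1 eq_s sub_x => [|a1 s1] /= eq_s sub_x; first by rewrite eq_s; constructor 2.
case/lastP: s2 eq_s sub_y => [|s2 d2] eq_s sub_y.
  by rewrite eq_s cats0 in sub_x *; constructor 1.
move: eq_s; rewrite -rcons_cat => -[-> /rcons_inj [_ ->]].
constructor 3; split; first by apply: (mem_subseq sub_x); rewrite mem_head.
by apply: (mem_subseq sub_y); rewrite mem_rcons mem_head.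
Qed.

Lemma order_iso4213 a b c d :
  order_iso [:: a; b; c; d] [:: 4; 2; 1; 3] = [&& c < b, b < d & d < a].
Proof.
rewrite /order_iso /=; apply/forallP/and3P => [iso | [cb bd da]].
  have cmp (i j : 'I_4) := forallP (iso i) j.
  move: (cmp (inord 2) (inord 1)) (cmp (inord 1) (inord 3)) (cmp (inord 3) (inord 0)).
  by rewrite !inordK // => /eqP -> /eqP -> /eqP ->.
move=> -[[|[|[|[|i]]]] //= _]; apply/forallP => -[[|[|[|[|j]]]] //= _]; apply/eqP; lia.
Qed.

Lemma contains4213P w :
  reflect (exists a b c d, subseq [:: a; b; c; d] w /\ [&& c < b, b < d & d < a])
          (contains w [:: 4; 2; 1; 3]).
Proof.
apply: (iffP (containsP _ _)) => [[s sub_s iso] | [a [b [c [d [sub_s iso]]]]]].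
  have /andP [/eqP size_s _] := iso.
  case: s size_s sub_s iso => [|a [|b [|c [|d [|]]]]] // _ sub_s iso.
  by exists a, b, c, d; rewrite -order_iso4213.
by exists [:: a; b; c; d]; rewrite ?order_iso4213.
Qed.

Lemma contains4213_cat x y : {in x & y, forall a b, a < b} ->
  contains (x ++ y) [:: 4; 2; 1; 3] =
  contains x [:: 4; 2; 1; 3] || contains y [:: 4; 2; 1; 3].
Proof.
move=> x_lt_y; apply/idP/orP => [|]; last first.
  by case; apply: contains_subseq; rewrite ?prefix_subseq ?suffix_subseq.
case/contains4213P => a [b [c [d [sub_s /and3P [cb bd da]]]]].
  case: (subseq_cat_ends (s := [:: b; c]) sub_s) => [sub_x | sub_y | [ax dy]].
  - by left; apply/contains4213P; exists a, b, c, d; rewrite sub_x cb bd da.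
  - by right; apply/contains4213P; exists a, b, c, d; rewrite sub_y cb bd da.
  - by have := x_lt_y _ _ ax dy; rewrite ltnNge ltnW.
Qed.

Lemma contains4213_cat21 x : 0 \notin x ->
  contains (x ++ [:: 2; 1]) [:: 4; 2; 1; 3] = contains x [:: 4; 2; 1; 3].
Proof.
move=> x_pos; apply/idP/idP; last exact/contains_subseq/prefix_subseq.
case/contains4213P => a [b [c [d [sub_s /and3P [cb bd da]]]]].
case: (subseq_cat_ends (s := [:: b; c]) sub_s) => [sub_x | /size_subseq // | [_ d21]].
  by apply/contains4213P; exists a, b, c, d; rewrite sub_x cb bd da.
have c0 : c = 0 by move: d21; rewrite !inE => /orP [] /eqP d_eq; lia.
have c_in : c \in x ++ [:: 2; 1] by apply: (mem_subseq sub_s); rewrite !inE eqxx !orbT.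
by move: c_in; rewrite mem_cat c0 (negbTE x_pos).
Qed.

Lemma forall_ord_iota n (P : pred nat) : [forall i : 'I_n, P i] = all P (iota 0 n).
Proof.
apply/forallP/allP => [Pn i | Pn i]; last by apply: Pn; rewrite mem_iota ltn_ord.
by rewrite mem_iota => /andP [_ lt_i_n]; exact: (Pn (Ordinal lt_i_n)).
Qed.

(* The body of [dumont1], as a predicate on [nat] that [forall_ord_iota] can match. *)
Definition dumont_at (w : seq nat) (i : nat) :=
  if ~~ odd (nth 0 w i) then (i.+1 < size w) && (nth 0 w i.+1 < nth 0 w i)
  else (i.+1 == size w) || (nth 0 w i < nth 0 w i.+1).

Definition dumont_rel (x y : nat) := if odd x then x < y else y < x.

Lemma dumont1E w : dumont1 w = sorted dumont_rel w && odd (last 1 w).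
Proof.
have -> : dumont1 w = all (dumont_at w) (iota 0 (size w)) by exact: forall_ord_iota.
elim: w => [|x t IHt] //=; rewrite -add1n iotaDl all_map.
have -> : all (preim (addn 1) (dumont_at (x :: t))) (iota 0 (size t)) =
          all (dumont_at t) (iota 0 (size t)).
  by apply: eq_all => i; rewrite /dumont_at /= add1n ltnS eqSS.
rewrite IHt; case: t {IHt} => [|y t]; rewrite /dumont_at /dumont_rel /=.
  by case: (odd x).
by rewrite andbA; case: (odd x).
Qed.

Lemma dumont1_cat21 u v :
  dumont1 (u ++ 2 :: 1 :: v) = sorted dumont_rel (rcons u 2) && dumont1 (1 :: v).
Proof.
rewrite !dumont1E last_cat /=; case: u => [|x u] //=.
by rewrite cat_path rcons_path /= !andbA.
Qed.

Lemma dumont1_cons1 v : {in v, forall x, 1 < x} -> dumont1 (1 :: v) = dumont1 v.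
Proof.
rewrite !dumont1E; case: v => [|y v] //= /(_ y (mem_head _ _)) gt1.
by rewrite {1}/dumont_rel gt1.
Qed.

Lemma sorted_dumont_rcons s m : odd m -> {in s, forall x, x < m} ->
  sorted dumont_rel (rcons s m) = dumont1 s.
Proof.
rewrite dumont1E; case: s => [|x s] //= oddm lt_m.
rewrite rcons_path /dumont_rel; have := lt_m _ (mem_last x s).
by case: (odd (last x s)) => /= lt_last; rewrite ?lt_last // ltnNge ltnW ?andbF.
Qed.

Lemma dumont_rel_compl K a b : odd K -> a < K -> b < K ->
  dumont_rel (K - a) (K - b) = dumont_rel a b.
Proof.
move=> oddK /ltnW aK /ltnW bK; rewrite /dumont_rel !oddB // oddK.
by case: (odd a) => /=; apply/idP/idP; lia.
Qed.

Lemma dumont1_shift c w : ~~ odd c -> dumont1 [seq x + c | x <- w] = dumont1 w.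
Proof.
move=> evenc; have shift_rel : relpre (addn^~ c) dumont_rel =2 dumont_rel.
  move=> a b; rewrite /= /dumont_rel oddD (negbTE evenc) addbF.
  by case: (odd a); rewrite ltn_add2r.
rewrite !dumont1E sorted_map (eq_sorted shift_rel); congr andb.
by case: w => [|x w] //=; rewrite (last_map (addn^~ c)) oddD (negbTE evenc) addbF.
Qed.

Lemma dumont_max_even s z y : sorted dumont_rel (rcons s z) -> y \in s -> z <= y ->
  {in s, forall x, x <= y} -> ~~ odd y.
Proof.
elim: s => [|x s IHs] //= sorted_s; rewrite inE => /orP [/eqP -> | ys] zy le_y.
  apply/negP => oddx; move: sorted_s; case: s {IHs} le_y => [|a s] le_y /=.
    by rewrite /dumont_rel oddx ltnNge zy.
  by rewrite /dumont_rel oddx ltnNge le_y // inE mem_head orbT.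
apply: IHs => // [|b bs]; first exact: path_sorted sorted_s.
by rewrite le_y // inE bs orbT.
Qed.

Lemma dumont_split21 (pi : seq nat) : dumont1 pi -> 2 \in pi -> 0 \notin pi ->
  pi = take (index 2 pi) pi ++ 2 :: 1 :: drop (index 2 pi).+2 pi.
Proof.
move=> dpi pi2 pi0; set i := index 2 pi.
have lt_i : i < size pi by rewrite index_mem.
have nth_i : nth 0 pi i = 2 := nth_index 0 pi2.
have := forallP dpi (Ordinal lt_i); rewrite /= nth_i /= => /andP [lt_i1 lt2].
have nth_i1 : nth 0 pi i.+1 = 1.
  move: (mem_nth 0 lt_i1) lt2; case: (nth 0 pi i.+1) => [|[|]] //.
  by rewrite (negbTE pi0).
by rewrite -{1}(cat_take_drop i pi) (drop_nth 0 lt_i) (drop_nth 0 lt_i1) nth_i nth_i1.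
Qed.

Definition glue21 (sg be : seq nat) :=
  [seq size sg + 3 - x | x <- sg] ++ 2 :: 1 :: [seq x + (size sg + 2) | x <- be].

Definition unglue21 (pi : seq nat) :=
  let j := index 2 pi in
  ([seq j + 3 - x | x <- take j pi], [seq x - (j + 2) | x <- drop j.+2 pi]).

Lemma glue21K sg be :
  {in sg, forall x, 0 < x <= size sg} -> unglue21 (glue21 sg be) = (sg, be).
Proof.
move=> sg_range; rewrite /unglue21 /glue21; set j := size sg.
have -> : index 2 ([seq j + 3 - x | x <- sg] ++ 2 :: 1 :: [seq x + (j + 2) | x <- be]) = j.
  rewrite index_cat size_map /= addn0; case: ifP => // /mapP [x /sg_range].
  by rewrite /j; lia.
rewrite take_size_cat ?size_map // drop_cat size_map -/j ltnNge !leqW // !subSn // subnn /=.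
rewrite drop0 -!map_comp; congr pair; apply: map_id_in => x /=; last by rewrite addnK.
by move/sg_range; rewrite /j; lia.
Qed.

Lemma dumont_glue21 sg be : ~~ odd (size sg) -> {in sg, forall x, 0 < x <= size sg} ->
  {in be, forall x, 0 < x} -> dumont1 (glue21 sg be) = dumont1 sg && dumont1 be.
Proof.
move=> even_sg sg_range be_pos; rewrite /glue21 dumont1_cat21; set j := size sg.
(* the letter 2 is the complement of the odd number j + 1 *)
have {2}-> : 2 = j + 3 - j.+1 by lia.
congr andb.
  rewrite -map_rcons sorted_map (@eq_in_sorted _ [pred x | x < j + 3] _ dumont_rel); first last.
  - by apply/allP => x; rewrite mem_rcons inE => /orP [/eqP -> | /sg_range]; rewrite /j /=; lia.
  - by move=> a b /= aK bK; apply: dumont_rel_compl; rewrite // oddD (negbTE even_sg).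
  by apply: sorted_dumont_rcons => [|x /sg_range /andP []]; rewrite /= ?ltnS.
rewrite dumont1_cons1 ?dumont1_shift //= ?oddD ?(negbTE even_sg) //.
by move=> _ /mapP [x /be_pos x_pos ->]; lia.
Qed.

Lemma contains_glue21 sg be :
  {in sg, forall x, 0 < x <= size sg} -> {in be, forall x, 0 < x} ->
  contains (glue21 sg be) [:: 4; 2; 1; 3] =
  contains sg [:: 1; 3; 4; 2] || contains be [:: 4; 2; 1; 3].
Proof.
move=> sg_range be_pos; rewrite /glue21 -[2 :: 1 :: _]/([:: 2; 1] ++ _) catA.
set j := size sg; rewrite contains4213_cat ?contains4213_cat21.
- rewrite (@contains_map_anti _ 5) ?contains_map_mono //.
    by move=> a b _ _; rewrite ltn_add2r.
  by move=> a b /sg_range a_range /sg_range b_range; apply/idP/idP; rewrite /j; lia.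
- by apply/mapP => -[x /sg_range]; rewrite /j; lia.
- move=> x _ + /mapP [b /be_pos b_pos ->]; rewrite /j mem_cat !inE.
  by case/orP => [/mapP [a /sg_range + ->] | /orP [] /eqP ->]; lia.
Qed.

Lemma perm_glue21 j k sg be : perm_eq sg (iota 1 j) -> perm_eq be (iota 1 k) ->
  perm_eq (glue21 sg be) (iota 1 (j + k).+2).
Proof.
move=> psg pbe; have := perm_size psg; rewrite size_iota /glue21 => ->.
have pC : perm_eq [seq j + 3 - x | x <- sg] (iota 3 j).
  by apply: perm_iota_map psg => [x y|x]; rewrite !mem_iota; lia.
have pS : perm_eq [seq x + (j + 2) | x <- be] (iota (3 + j) k).
  by apply: perm_iota_map pbe => [x y|x]; rewrite ?mem_iota; lia.
have -> : (j + k).+2 = 2 + j + k by lia.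
rewrite !iotaD -catA -[2 :: 1 :: _]/([:: 2; 1] ++ _) perm_catCA.
by apply: perm_cat => //; apply: perm_cat.
Qed.

Lemma avoid4213_cat21_lt (u w : seq nat) : uniq (u ++ 2 :: 1 :: w) -> 0 \notin w ->
  ~~ contains (u ++ 2 :: 1 :: w) [:: 4; 2; 1; 3] -> {in u & w, forall y z, y < z}.
Proof.
rewrite cat_uniq => /and3P [_ /hasPn disj uniq21w] w0 avoid y z yu zw.
move: uniq21w; rewrite /= inE negb_or => /and3P [/andP [_ w2] w1 _].
rewrite ltnNge leq_eqVlt; apply/negP => /orP [/eqP eq_zy | lt_zy].
  by move: (disj z); rewrite !inE zw eq_zy yu !orbT => /(_ isT).
case/negP: avoid; apply/contains4213P; exists y, 2, 1, z; split.
  by rewrite -cat1s; apply: cat_subseq; rewrite ?sub1seq //= sub1seq.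
have z_ge3 : 2 < z by case: z zw {lt_zy} => [|[|[|z]]] zw; rewrite ?zw in w0 w1 w2.
by rewrite z_ge3 lt_zy.
Qed.

Lemma dumont4213_blocks m (u w : seq nat) : let pi := u ++ 2 :: 1 :: w in
  perm_eq pi (iota 1 m) -> dumont1 pi -> ~~ contains pi [:: 4; 2; 1; 3] ->
  [/\ perm_eq u (iota 3 (size u)), perm_eq w (iota (3 + size u) (size w)) & ~~ odd (size u)].
Proof.
move=> pi ppi dpi avoid.
have uniq_pi : uniq pi by rewrite (perm_uniq ppi) iota_uniq.
have pi_pos : 0 \notin pi by rewrite (perm_mem ppi) mem_iota.
have w_pos : 0 \notin w by apply: contraNN pi_pos => w0; rewrite mem_cat !inE w0 !orbT.
have puw : perm_eq (u ++ w) (iota 3 (size u + size w)).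
  have size_m : m = (size u + size w).+2.
    by rewrite -(size_iota 1 m) -(perm_size ppi) size_cat /= !addnS.
  rewrite -(perm_cat2l [:: 2; 1] (u ++ w)); apply: perm_trans (_ : perm_eq _ pi) _.
    by rewrite /pi -[2 :: 1 :: _]/([:: 2; 1] ++ _) perm_catCA.
  by apply: perm_trans ppi _; rewrite size_m; apply/seq.permP => p /=; rewrite addnCA.
have [pu pw] := perm_iota_cat_lt puw (avoid4213_cat21_lt uniq_pi w_pos avoid).
split=> //; case: (size u =P 0) => [-> // | /eqP u_nonempty].
have u_range : {in u, forall x, 3 <= x < 3 + size u} by move=> x; rewrite (perm_mem pu) mem_iota.
rewrite -[odd _]negbK -/(odd (size u).+2).
apply: (@dumont_max_even u 2) => [|||x /u_range]; try lia.
- by move: dpi; rewrite dumont1_cat21 => /andP [].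
- by rewrite (perm_mem pu) mem_iota; lia.
Qed.

Definition dumont_avoiders (p : seq nat) (m : nat) : seq (seq nat) :=
  [seq w <- permutations (iota 1 m) | dumont1 w && ~~ contains w p].

Lemma mem_dumont_avoiders p m w :
  (w \in dumont_avoiders p m) = [&& perm_eq w (iota 1 m), dumont1 w & ~~ contains w p].
Proof. by rewrite mem_filter mem_permutations andbC. Qed.

Lemma numD1E p n : numD1 p n = size (dumont_avoiders p n.*2).
Proof. by rewrite size_filter -card_perm_seq_pred. Qed.

Lemma glue21_dumont_avoiders j k sg be :
  sg \in dumont_avoiders [:: 1; 3; 4; 2] j.*2 -> be \in dumont_avoiders [:: 4; 2; 1; 3] k.*2 ->
  glue21 sg be \in dumont_avoiders [:: 4; 2; 1; 3] (j + k).+1.*2.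
Proof.
rewrite !mem_dumont_avoiders => /and3P [psg dsg asg] /and3P [pbe dbe abe].
have sg_range := perm_iota1_range psg.
have be_pos : {in be, forall x, 0 < x} by move=> x /(perm_iota1_range pbe) /andP [].
have even_sg : ~~ odd (size sg) by rewrite (perm_size psg) size_iota odd_double.
rewrite dumont_glue21 // contains_glue21 // dsg dbe (negbTE asg) (negbTE abe) !andbT.
by rewrite doubleS doubleD; apply: perm_glue21.
Qed.

Lemma dumont_avoiders4213_glue21 n pi : pi \in dumont_avoiders [:: 4; 2; 1; 3] n.+1.*2 ->
  exists k sg be, [/\ k <= n, sg \in dumont_avoiders [:: 1; 3; 4; 2] (n - k).*2,
                      be \in dumont_avoiders [:: 4; 2; 1; 3] k.*2 & pi = glue21 sg be].
Proof.
rewrite mem_dumont_avoiders => /and3P [ppi dpi avoid].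
have [u [w pi_eq]] : exists u w, pi = u ++ 2 :: 1 :: w.
  by do 2 eexists; apply: dumont_split21; rewrite // (perm_mem ppi) mem_iota; lia.
subst pi; have [pu pw even_u] := dumont4213_blocks ppi dpi avoid.
have size_uw : size u + size w = n.*2.
  by have := perm_size ppi; rewrite size_cat size_iota /= doubleS !addnS => -[].
have [k size_w] : exists k, size w = k.*2 by exists (size w)./2; lia.
set j := size u in pu pw even_u size_uw *.
pose sg := [seq j + 3 - x | x <- u]; pose be := [seq x - (j + 2) | x <- w].
have psg : perm_eq sg (iota 1 j).
  by apply: perm_iota_map pu => [x y|x]; rewrite !mem_iota; lia.
have pbe : perm_eq be (iota 1 (size w)).
  by apply: perm_iota_map pw => [x y|x]; rewrite ?mem_iota; lia.
have glue_eq : u ++ 2 :: 1 :: w = glue21 sg be.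
  rewrite /glue21 size_map -!map_comp.
  congr (_ ++ 2 :: 1 :: _); symmetry; apply: map_id_in => x /=.
    by rewrite (perm_mem pu) mem_iota; lia.
  by rewrite (perm_mem pw) mem_iota; lia.
have sg_range := perm_iota1_range psg.
have be_pos : {in be, forall x, 0 < x} by move=> x /(perm_iota1_range pbe) /andP [].
have even_sg : ~~ odd (size sg) by rewrite size_map.
move: dpi avoid; rewrite glue_eq dumont_glue21 // contains_glue21 // negb_or.
move=> /andP [dsg dbe] /andP [asg abe]; exists k, sg, be.
rewrite !mem_dumont_avoiders dsg dbe asg abe -size_w pbe !andbT.
have -> : (n - k).*2 = j by lia.
by split=> //; lia.
Qed.

Definition block_pairs n k : seq (seq nat * seq nat) :=
  [seq (sg, be) | sg <- dumont_avoiders [:: 1; 3; 4; 2] (n - k).*2,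
                  be <- dumont_avoiders [:: 4; 2; 1; 3] k.*2].

Lemma perm_dumont_avoiders4213 n :
  perm_eq (dumont_avoiders [:: 4; 2; 1; 3] n.+1.*2)
          [seq glue21 sb.1 sb.2 | k <- iota 0 n.+1, sb <- block_pairs n k].
Proof.
apply: uniq_perm; first exact/filter_uniq/permutations_uniq.
- apply: allpairs_uniq_dep => [|k _|]; first exact: iota_uniq.
    by apply: allpairs_uniq; rewrite ?filter_uniq ?permutations_uniq // => -[? ?] [? ?].
  have tag_inv (t : {k : nat & (seq nat * seq nat)}) :
      t \in [seq existT _ k sb | k <- iota 0 n.+1, sb <- block_pairs n k] ->
      tag t <= n /\ perm_eq (tagged t).1 (iota 1 (n - tag t).*2).
    case/allpairsPdep => k [sb [k_in sb_in ->]] /=; split; first by rewrite mem_iota in k_in.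
    by case/allpairsP: sb_in => -[sg be] [/=]; rewrite mem_dumont_avoiders => /and3P [] ? _ _ _ ->.
  move=> [k1 [sg1 be1]] [k2 [sg2 be2]] /tag_inv /= [le1 p1] /tag_inv /= [le2 p2].
  have range1 := perm_iota1_range p1; have range2 := perm_iota1_range p2.
  move/(congr1 unglue21); rewrite !glue21K // => -[eq_sg <-]; subst sg2.
  have := perm_size p1; rewrite (perm_size p2) !size_iota => eq_size.
  by have -> : k1 = k2 by lia.
- move=> pi; apply/idP/allpairsPdep.
    case/dumont_avoiders4213_glue21 => k [sg [be [le_kn sg_in be_in ->]]].
    by exists k, (sg, be); split; rewrite ?mem_iota //; apply/allpairsP; exists (sg, be).
  case=> k [_ [k_in /allpairsP [[sg be] [/= sg_in be_in ->]] ->]] /=.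
  by move: (glue21_dumont_avoiders sg_in be_in); rewrite subnK //; rewrite mem_iota in k_in.
Qed.

Theorem lemma3p3 :
  numD1 [:: 4; 2; 1; 3] 0 = 1 /\
  forall n : nat,
    numD1 [:: 4; 2; 1; 3] n.+1 =
    \sum_(k < n.+1) numD1 [:: 4; 2; 1; 3] k * numD1 [:: 1; 3; 4; 2] (n - k).
Proof.
split.
  rewrite numD1E /dumont_avoiders /= dumont1E /=.
  by case: containsP => // -[s]; rewrite subseq0 => /eqP -> /andP [].
move=> n; rewrite numD1E (perm_size (perm_dumont_avoiders4213 n)) size_allpairs_dep.
rewrite sumnE big_map -[iota 0 n.+1]/(index_iota 0 n.+1) big_mkord.
by apply: eq_bigr => k _; rewrite size_allpairs mulnC !numD1E.
Qed.
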